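(* For every integer $n\ge 1$, the polytope \[\mathrm{Newt}(U_n)=\sum_{1\le i<j\le n}\mathrm{conv}\{e_i+e_{n+j},\,e_j+e_{n+i}\}\subseteq\mathbb{R}^{2n}\] is unimodularly equivalent to the permutohedron $\Pi_n$.
   Context: Here $e_1,\dots,e_{2n}$ are the standard basis vectors of $\mathbb{R}^{2n}$ and the sum is a Minkowski sum; this is the sum of the Newton polytopes of the binomials $t_it_{n+j}-t_jt_{n+i}$, $1\le i<j\le n$ (the Newton polytope of a polynomial being the convex hull of its exponent vectors). The permutohedron is $\Pi_n=\mathrm{conv}\{(\pi_1,\dots,\pi_n): \pi\in\mathfrak{S}_n\}\subseteq\mathbb{R}^n$. Two polytopes $P,P'\subseteq\mathbb{R}^m$ are unimodularly equivalent if $P'=\{Mx+v: x\in P\}$ for some $M\in \mathrm{GL}_m(\mathbb{Z})$ and $v\in\mathbb{Z}^m$; if $P\subseteq\mathbb{R}^N$ and $P'\subseteq\mathbb{R}^m$ with $N>m$, they are called unimodularly equivalent if $P$ is unimodularly equivalent to $P'\times\{0\}\subseteq\mathbb{R}^N$. *)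

From HB Require Import structures.
From mathcomp Require Import all_boot all_order all_fingroup all_algebra.
Set Implicit Arguments. Unset Strict Implicit. Unset Printing Implicit Defensive.
Import Order.TTheory GRing.Theory Num.Theory.
Local Open Scope ring_scope.

Section Polytopes.
Variable R : realFieldType.

Definition conv m (S : seq 'cV[R]_m) : 'cV[R]_m -> Prop :=
  fun x => exists w : 'I_(size S) -> R,
    (forall i, 0 <= w i) /\ \sum_i w i = 1 /\ x = \sum_i w i *: S`_(val i).

Definition msum m (A B : 'cV[R]_m -> Prop) : 'cV[R]_m -> Prop :=
  fun x => exists a b, A a /\ B b /\ x = a + b.

Definition bigmsum m (L : seq ('cV[R]_m -> Prop)) : 'cV[R]_m -> Prop :=
  foldr (@msum m) (fun x => x = 0) L.

Definition ev m (k : 'I_m) : 'cV[R]_m := delta_mx k 0.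

(* Newt(U_n) = sum_{i<j} conv{e_i + e_{n+j}, e_j + e_{n+i}} in R^{2n} = R^{n+n};
   coordinate n+j is rshift n j. *)
Definition newtU (n : nat) : 'cV[R]_(n + n) -> Prop :=
  bigmsum [seq conv [:: ev (lshift n p.1) + ev (rshift n p.2);
                        ev (lshift n p.2) + ev (rshift n p.1)]
          | p <- filter (fun p : 'I_n * 'I_n => (p.1 < p.2)%N)
                     [seq (i, j) | i <- enum 'I_n, j <- enum 'I_n]].

Definition permutohedron (n : nat) : 'cV[R]_n -> Prop :=
  conv [seq \col_(k < n) (nat_of_ord (s k)).+1%:R | s : 'S_n <- enum [set: 'S_n]].

Definition pad0 m k (P : 'cV[R]_m -> Prop) : 'cV[R]_(m + k) -> Prop :=
  fun y => exists x, P x /\ y = col_mx x 0.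

Definition unimod_equiv m (P P' : 'cV[R]_m -> Prop) : Prop :=
  exists (M : 'M[int]_m) (v : 'cV[int]_m),
    M \in unitmx /\
    forall y, P' y <-> exists x, P x /\ y = map_mx intr M *m x + map_mx intr v.

End Polytopes.

(* Write x in R^(n+n) as (u, d).  Each summand conv{e_i + e_(n+j), e_j + e_(n+i)}
   has u + d = e_i + e_j, so u + d is the constant vector (n-1) on Newt(U_n), and the
   unimodular map (u, d) |-> (u + 1, u + d - (n-1)) sends Newt(U_n) onto
   (Z + 1) x {0}, where Z = sum_(i<j) [e_i, e_j] is the projection u.
   Choosing an endpoint of each segment orients the pair {i, j}, i.e. builds a
   tournament, and the corresponding point of Z is its score vector.
   A permutation s yields the transitive tournament with scores s - 1, so by
   convexity Pi_n <= Z + 1.  Conversely, scores of tournaments (tracked game by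
   game, with the unplayed games as slack) satisfy Landau's conditions
   sum_(k in A) s_k >= C(|A|, 2), with equality for A = [n].  A Landau vector with
   a tie s_i = s_j is the midpoint of the two Landau vectors obtained by moving a
   point between i and j, both with a larger sum of squares; as that sum is
   bounded, induction ends at injective Landau vectors, i.e. permutations of
   (0, ..., n-1), so Z + 1 <= Pi_n. *)

From HB Require Import structures.
From mathcomp Require Import all_boot all_order all_fingroup all_algebra.
From mathcomp Require Import zify ring.
Set Implicit Arguments. Unset Strict Implicit. Unset Printing Implicit Defensive.
Import Order.TTheory GRing.Theory Num.Theory.

Lemma sum_pred1 (T : finType) (P : pred T) (i : T) : \sum_(k | P k) (k == i) = P i.
Proof.
rewrite big_mkcond (bigD1 i) //= eqxx big1 ?addn0 => [|k /negbTE ki]; first by case: (P i).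
by rewrite ki; case: (P k).
Qed.

Section Pairs.
Variable n : nat.

Definition ltpairs : seq ('I_n * 'I_n) :=
  [seq p : 'I_n * 'I_n <- [seq (i, j) | i <- enum 'I_n, j <- enum 'I_n] | p.1 < p.2].

Lemma big_ltpairs (F : 'I_n * 'I_n -> nat) :
  \sum_(p <- ltpairs) F p = \sum_(p : 'I_n * 'I_n | p.1 < p.2) F p.
Proof.
rewrite big_filter big_mkcond big_allpairs big_enum /=.
under eq_bigr do rewrite big_enum /=.
by rewrite pair_bigA [RHS]big_mkcond; apply: eq_bigr => -[].
Qed.

Lemma sum_ltpairs_sym (G : 'I_n -> 'I_n -> nat) :
  \sum_(p <- ltpairs) (G p.1 p.2 + G p.2 p.1) = \sum_i \sum_(j | j != i) G i j.
Proof.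
rewrite big_ltpairs big_split /=.
rewrite [X in _ + X](reindex_inj (can_inj swap_pairK)) /=.
rewrite (pair_big_dep xpredT (fun i j => j != i)) /=.
rewrite big_mkcond [X in _ + X]big_mkcond [RHS]big_mkcond -big_split /=.
apply: eq_bigr => -[i j] _ /=.
by rewrite -val_eqE /=; case: ltngtP; rewrite ?addn0.
Qed.

Lemma count_ltpairs_in (A : {set 'I_n}) :
  count [pred p | (p.1 \in A) && (p.2 \in A)] ltpairs = 'C(#|A|, 2).
Proof.
rewrite -sum1_count big_mkcond /=.
set c := \sum_(p <- ltpairs) _.
have twice : c.*2 = #|A| * #|A|.-1.
  rewrite -addnn -big_split /=.
  under eq_bigr do rewrite [in X in _ + X]andbC.
  rewrite (sum_ltpairs_sym (fun i j => (i \in A) && (j \in A) : nat)).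
  rewrite -sum_nat_const [RHS]big_mkcond /=; apply: eq_bigr => i _.
  case: (boolP (i \in A)) => iA /=; last by rewrite big1.
  rewrite (cardsD1 i A) iA -sum1_card big_mkcond [RHS]big_mkcond /=.
  by apply: eq_bigr => j _; rewrite !inE; case: (j != i); case: (j \in A).
by rewrite bin2 -twice doubleK.
Qed.

Lemma size_ltpairs : size ltpairs = 'C(n, 2).
Proof.
rewrite -[n in RHS]card_ord -cardsT -count_ltpairs_in -count_predT.
by apply: eq_count => p; rewrite !inE.
Qed.

Lemma sum_ltpairs_incident (k : 'I_n) (F : 'I_n -> 'I_n -> nat) :
  \sum_(p <- ltpairs) ((p.1 == k) * F p.1 p.2 + (p.2 == k) * F p.2 p.1) =
  \sum_(j | j != k) F k j.
Proof.
rewrite (sum_ltpairs_sym (fun i j => (i == k) * F i j)) (bigD1 k) //=.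
rewrite [X in _ + X]big1 ?addn0 => [|i /negbTE ik]; last by apply: big1 => j _; rewrite ik.
by apply: eq_bigr => j _; rewrite eqxx mul1n.
Qed.

Lemma sum_ltpairs_degree (k : 'I_n) :
  \sum_(p <- ltpairs) ((p.1 == k) + (p.2 == k)) = n.-1.
Proof.
have := sum_ltpairs_incident k (fun _ _ => 1).
by rewrite sum1_card cardC1 card_ord; under eq_bigr do rewrite !muln1.
Qed.

Lemma sum_ord_ltn m : m <= n -> \sum_(j < n) (j < m) = m.
Proof.
move=> le_mn; rewrite -(big_mkord xpredT (fun j => (j < m : nat))).
rewrite (big_cat_nat (leq0n m) le_mn) /= (@eq_big_nat _ _ _ 0 m _ (fun=> 1)).
  rewrite [X in _ + X](@eq_big_nat _ _ _ m n _ (fun=> 0)).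
    by rewrite !sum_nat_const_nat muln1 muln0 addn0 subn0.
  by move=> j /andP[+ _]; rewrite leqNgt => /negbTE->.
by move=> j /andP[_ ->].
Qed.

Lemma sum_ltpairs_perm (s : 'S_n) (k : 'I_n) :
  \sum_(p <- ltpairs) ((p.1 == k) * (s p.2 < s p.1) + (p.2 == k) * (s p.1 < s p.2))
  = s k.
Proof.
rewrite (sum_ltpairs_incident k (fun i j => s j < s i : nat)).
rewrite -[RHS](sum_ord_ltn (ltnW (ltn_ord (s k)))).
by rewrite [RHS](reindex_inj (@perm_inj _ s)) [RHS](bigD1 k) //= ltnn.
Qed.

End Pairs.

Section Landau.
Variable n : nat.
Implicit Types (s : 'I_n -> nat) (A : {set 'I_n}) (i j k : 'I_n).

Definition landau_score s : Prop :=
  (forall A, 'C(#|A|, 2) <= \sum_(k in A) s k) /\ \sum_k s k = 'C(n, 2).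

(* [s] counts the games won so far and [L] lists the games still to be played. *)
Definition landau_pending s (L : seq ('I_n * 'I_n)) : Prop :=
  (forall A, 'C(#|A|, 2) <=
     \sum_(k in A) s k + count [pred p | (p.1 \in A) && (p.2 \in A)] L)
  /\ \sum_k s k + size L = 'C(n, 2).

Lemma landau_pending_ltpairs : landau_pending (fun=> 0) (ltpairs n).
Proof. by split=> [A|]; rewrite big1 // ?count_ltpairs_in ?size_ltpairs. Qed.

Lemma landau_pending_nil s : landau_pending s [::] -> landau_score s.
Proof. by case=> L T; split=> [A|]; [have := L A | move: T]; rewrite /= addn0. Qed.

Lemma landau_pending_play s p L i : (i == p.1) || (i == p.2) ->
  landau_pending s (p :: L) -> landau_pending (fun k => s k + (k == i)) L.
Proof.
move=> ip [L_A T]; split=> [A|]; last by move: T; rewrite big_split /= sum_pred1 /=; lia.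
have := L_A A; rewrite big_split /= sum_pred1 /=.
by case/orP: ip => /eqP->; case: (p.1 \in A); case: (p.2 \in A) => /=; lia.
Qed.

Lemma landau_score_lt s k : landau_score s -> s k < n.
Proof.
case=> L T; have := L [set~ k]; rewrite cardsC1 card_ord.
have n_gt0 : 0 < n := leq_ltn_trans (leq0n k) (ltn_ord k).
have binC : 'C(n, 2) = 'C(n.-1, 2) + n.-1 by rewrite -[in LHS](prednK n_gt0) binS bin1.
have sumC : \sum_j s j = s k + \sum_(j in [set~ k]) s j.
  by rewrite (bigD1 k) //=; congr (_ + _); apply: eq_bigl => j; rewrite !inE.
rewrite -[n in _ < n](prednK n_gt0) ltnS; move: T; rewrite sumC binC.
by set S := \sum_(j in _) _; lia.
Qed.

Lemma landau_score_tie_gt0 s i j : landau_score s -> i != j -> s i = s j -> 0 < s j.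
Proof.
case=> L _ ij sij; have := L [set i; j].
by rewrite cards2 ij big_setU1 ?inE //= big_set1 sij binn; lia.
Qed.

(* The subtraction truncates unless 0 < s j. *)
Definition transfer s i j : 'I_n -> nat := fun k => s k + (k == i) - (k == j).

Lemma sum_transfer s i j (P : pred 'I_n) : i != j -> 0 < s j ->
  \sum_(k | P k) transfer s i j k + P j = \sum_(k | P k) s k + P i.
Proof.
move=> ij sj; rewrite -!sum_pred1 -!big_split /=; apply: eq_bigr => k _.
rewrite /transfer; case: (eqVneq k j) => [->|kj]; last by rewrite subn0 addn0.
by rewrite eq_sym (negbTE ij); lia.
Qed.

Lemma transfer_landau s i j : i != j -> s i = s j -> landau_score s ->
  landau_score (transfer s i j).
Proof.
move=> ij sij Ls; have sj := landau_score_tie_gt0 Ls ij sij; case: Ls => L T.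
split=> [A|]; last by have := sum_transfer xpredT ij sj; rewrite /= T; lia.
have := sum_transfer (fun k => k \in A) ij sj; have := L A.
set X := \sum_(k in A) transfer s i j k; set Y := \sum_(k in A) s k.
case iA: (i \in A); case jA: (j \in A) => /=; try lia.
have := L (A :\ j); have := L (i |: A).
rewrite big_setU1 ?iA //= -/Y cardsU1 iA (cardsD1 j A) jA /= sij.
have -> : Y = s j + \sum_(k in A :\ j) s k by rewrite /Y (big_setD1 j).
set Z := \sum_(k in A :\ j) s k; set m := #|A :\ j|; rewrite !binS bin1 bin0; lia.
Qed.

Definition sumsq s := \sum_k s k ^ 2.

Lemma sumsq_transfer s i j : i != j -> s i = s j -> 0 < s j ->
  sumsq (transfer s i j) = sumsq s + 2.
Proof.
move=> ij sij sj; rewrite /sumsq (bigD1 i) // [in RHS](bigD1 i) //=.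
rewrite (bigD1 j) 1?eq_sym //= [in RHS](bigD1 j) 1?eq_sym //=.
rewrite (eq_bigr (fun k => s k ^ 2)) => [|k /andP[/negbTE ki /negbTE kj]]; last first.
  by rewrite /transfer ki kj addn0 subn0.
by rewrite /transfer eqxx (negbTE ij) eq_sym (negbTE ij) eqxx /= sij; nia.
Qed.

Lemma sumsq_landau_le s : landau_score s -> sumsq s <= n ^ 3.
Proof.
move=> Ls; apply: (@leq_trans (\sum_(k < n) n ^ 2)).
  by apply: leq_sum => k _; rewrite leq_exp2r // ltnW // landau_score_lt.
by rewrite big_const_ord iter_addn_0 mulnC.
Qed.

Lemma transfer_add s i j k : 0 < s i -> 0 < s j ->
  transfer s i j k + transfer s j i k = (s k).*2.
Proof.
move=> si sj; rewrite /transfer -addnn.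
by case: (eqVneq k i) => [->|_]; case: (eqVneq _ j) => [->|_]; rewrite ?eqxx /=; lia.
Qed.

End Landau.

Local Open Scope ring_scope.

Lemma convex_combDr (R : pzRingType) (V : lmodType R) (a b c : V) (t : R) :
  t *: (a + c) + (1 - t) *: (b + c) = t *: a + (1 - t) *: b + c.
Proof. by rewrite !scalerDr addrACA -scalerDl subrKC scale1r. Qed.

Section Convexity.
Variables (R : realFieldType) (m : nat).
Implicit Types (S : seq 'cV[R]_m) (C P Q : 'cV[R]_m -> Prop).

Definition convex C :=
  forall x y (t : R), C x -> C y -> 0 <= t <= 1 -> C (t *: x + (1 - t) *: y).

Lemma conv_convex S : convex (conv S).
Proof.
move=> _ _ t [w [w0 [w1 ->]]] [u [u0 [u1 ->]]] /andP[t0 t1].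
exists (fun i => t * w i + (1 - t) * u i); split; [|split].
- by move=> i; rewrite addr_ge0 ?mulr_ge0 ?subr_ge0.
- by rewrite big_split /= -!mulr_sumr w1 u1 !mulr1 subrKC.
- rewrite !scaler_sumr -big_split /=; apply: eq_bigr => i _.
  by rewrite [RHS]scalerDl !scalerA.
Qed.

Lemma mem_conv S i : (i < size S)%N -> conv S S`_i.
Proof.
move=> iS; exists (fun k => (val k == i)%:R); split; [|split].
- by move=> k; rewrite ler0n.
- rewrite (bigD1 (Ordinal iS)) //= eqxx big1 ?addr0 // => k /negbTE.
  by rewrite -val_eqE /= => ->.
- rewrite (bigD1 (Ordinal iS)) //= eqxx scale1r big1 ?addr0 // => k /negbTE.
  by rewrite -val_eqE /= => ->; rewrite scale0r.
Qed.

Lemma conv_sub_convex C S : convex C -> (forall i, (i < size S)%N -> C S`_i) ->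
  forall x, conv S x -> C x.
Proof.
move=> convC; elim: S => [|a S IH] CS _ [w [w0 [w1 ->]]].
  by move: w1; rewrite big_ord0 => /eqP; rewrite eq_sym oner_eq0.
rewrite big_ord_recl /=; move: w1; rewrite big_ord_recl /=.
set t := w ord0; set r := \sum_(i < size S) w (lift ord0 i) => w1.
have r0 : 0 <= r by apply: sumr_ge0 => i _.
have rE : r = 1 - t by rewrite -w1 addrC addKr.
have [r_eq0|r_neq0] := eqVneq r 0.
  have w_lift0 i : w (lift ord0 i) = 0.
    exact: (psumr_eq0P (fun k _ => w0 (lift ord0 k)) r_eq0).
  rewrite big1 ?addr0 => [|i _]; last by rewrite w_lift0 scale0r.
  by move: w1; rewrite r_eq0 addr0 => ->; rewrite scale1r; apply: (CS 0%N).
pose y := \sum_(i < size S) (w (lift ord0 i) / r) *: S`_i.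
have Cy : C y.
  apply: IH => [i iS|]; first exact: (CS i.+1).
  exists (fun i => w (lift ord0 i) / r); split; [|split] => //.
  - by move=> i; rewrite divr_ge0.
  - by rewrite -mulr_suml divff.
have -> : \sum_(i < size S) w (lift ord0 i) *: (a :: S)`_(lift ord0 i) = (1 - t) *: y.
  rewrite -rE scaler_sumr; apply: eq_bigr => i _.
  by rewrite scalerA mulrC divfK.
apply: convC => //; first exact: (CS 0%N).
by rewrite w0 -subr_ge0 -rE.
Qed.

Lemma msum_convex P Q : convex P -> convex Q -> convex (msum P Q).
Proof.
move=> cP cQ _ _ t [a [b [Pa [Qb ->]]]] [a' [b' [Pa' [Qb' ->]]]] t01.
exists (t *: a + (1 - t) *: a'), (t *: b + (1 - t) *: b'); split; [|split].
- exact: cP.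
- exact: cQ.
- by rewrite !scalerDr addrACA.
Qed.

Lemma bigmsum_convex (I : Type) (F : I -> 'cV[R]_m -> Prop) (L : seq I) :
  (forall i, convex (F i)) -> convex (bigmsum (map F L)).
Proof.
move=> cF; elim: L => [|i L IH] /=; last exact: msum_convex.
by move=> _ _ t -> -> _; rewrite !scaler0 addr0.
Qed.

Lemma bigmsum_sum (I : Type) (F : I -> 'cV[R]_m -> Prop) (L : seq I) (f : I -> 'cV[R]_m) :
  (forall i, F i (f i)) -> bigmsum (map F L) (\sum_(i <- L) f i).
Proof.
move=> Ff; elim: L => [|i L IH] /=; first by rewrite big_nil.
by rewrite big_cons; exists (f i), (\sum_(j <- L) f j).
Qed.

Lemma conv2_segment (a b y : 'cV[R]_m) : conv [:: a; b] y ->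
  exists2 t : R, 0 <= t <= 1 & y = t *: a + (1 - t) *: b.
Proof.
move=> [w [w0 [w1 ->]]]; rewrite !big_ord_recl !big_ord0 !addr0 /= in w1 *.
exists (w ord0); last by rewrite -w1 [w ord0 + _]addrC addrK.
by rewrite w0 -w1 lerDl w0.
Qed.

End Convexity.

Section Permutohedron.
Variables (R : realFieldType) (n : nat).
Implicit Types (s : 'I_n -> nat) (i j k : 'I_n).

Definition score_vec s : 'cV[R]_n := \col_k (s k).+1%:R.

Lemma permutohedron_convex : convex (@permutohedron R n).
Proof. exact: conv_convex. Qed.

Lemma permutohedron_perm (s : 'S_n) : permutohedron (score_vec (fun k => s k)).
Proof.
set P := enum [set: 'S_n]; have sP : s \in P by rewrite mem_enum inE.
have := @mem_conv R n [seq score_vec (fun k => s' k) | s' : 'S_n <- P] (index s P).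
by rewrite size_map index_mem sP (nth_map s) ?index_mem // nth_index //; apply.
Qed.

Lemma score_vec_transfer_mid s i j : (0 < s i)%N -> (0 < s j)%N ->
  score_vec s =
  2^-1 *: score_vec (transfer s i j) + (1 - 2^-1) *: score_vec (transfer s j i).
Proof.
move=> si sj; apply/matrixP => k l; rewrite !mxE -!natr1.
have := congr1 (fun m => m%:R : R) (transfer_add k si sj).
rewrite /= -muln2 natrD natrM => /(canRL (addrK _)) ->.
by field.
Qed.

Lemma landau_score_permutohedron s : landau_score s -> permutohedron (score_vec s).
Proof.
have [N] := ubnP (n ^ 3 - sumsq s)%N; elim: N s => // N IH s ltN Ls.
pose f k := Ordinal (landau_score_lt k Ls).
have [/injectiveP f_inj|/injectivePn[i [j ij fij]]] := boolP (injectiveb f).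
  have := permutohedron_perm (perm f_inj).
  by congr permutohedron; apply/matrixP => k l; rewrite !mxE permE.
have sij : s i = s j by move: fij => /(congr1 val).
have sj := landau_score_tie_gt0 Ls ij sij.
have si : (0 < s i)%N by rewrite sij.
have ji : j != i by rewrite eq_sym.
have IHt i' j' : i' != j' -> s i' = s j' -> (0 < s j')%N ->
    permutohedron (score_vec (transfer s i' j')).
  move=> ij' sij' sj'; have Ls' := transfer_landau ij' sij' Ls.
  have := sumsq_landau_le Ls'; rewrite sumsq_transfer // => le_n3.
  by apply: IH Ls'; rewrite sumsq_transfer //; lia.
rewrite (score_vec_transfer_mid si sj); apply: permutohedron_convex.
- exact: IHt.
- exact: IHt ji (esym sij) si.
- by rewrite invr_ge0 ler0n invf_le1 ?ler1n ?ltr0n.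
Qed.

End Permutohedron.

Arguments score_vec {R n} s.

Section NewtonPolytope.
Variables (R : realFieldType) (n : nat).
Implicit Types (s : 'I_n -> nat) (x : 'cV[R]_(n + n)).

Definition arc (i j : 'I_n) : 'cV[R]_(n + n) := col_mx (delta_mx i 0) (delta_mx j 0).

Definition edge (p : 'I_n * 'I_n) := conv [:: arc p.1 p.2; arc p.2 p.1].

Lemma newtU_edges : @newtU R n = bigmsum (map edge (ltpairs n)).
Proof.
congr bigmsum; apply: eq_map => p.
by rewrite /edge /arc /ev !delta_mx_ushift !delta_mx_dshift !add_col_mx !addr0 !add0r.
Qed.

Lemma newtU_convex : convex (@newtU R n).
Proof. by rewrite newtU_edges; apply: bigmsum_convex => p; apply: conv_convex. Qed.

Lemma bigmsum_edges_halves L x : bigmsum (map edge L) x ->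
  usubmx x + dsubmx x = \sum_(p <- L) (delta_mx p.1 0 + delta_mx p.2 0).
Proof.
elim: L x => [|p L IH] x /=; first by move=> ->; rewrite big_nil !linear0 addr0.
move=> [_ [b [/conv2_segment [t _ ->] [Lb ->]]]].
rewrite big_cons -(IH b Lb) !linearD !linearZ /= !col_mxKu !col_mxKd.
by apply/matrixP => k l; rewrite !mxE; ring.
Qed.

Lemma newtU_halves x : newtU x -> usubmx x + dsubmx x = const_mx (n.-1)%:R.
Proof.
rewrite newtU_edges => /bigmsum_edges_halves ->; apply/matrixP => k l.
rewrite summxE mxE -(sum_ltpairs_degree k) natr_sum; apply: eq_bigr => p _.
by rewrite !mxE (ord1 l) eqxx !andbT natrD ![k == _]eq_sym.
Qed.

Lemma score_vec_incr s i :
  score_vec (fun k => s k + (k == i))%N = delta_mx i 0 + score_vec s :> 'cV[R]_n.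
Proof. by apply/matrixP => k l; rewrite !mxE (ord1 l) eqxx andbT -addSn natrD addrC. Qed.

Lemma landau_pending_permutohedron L s x : landau_pending s L ->
  bigmsum (map edge L) x -> permutohedron (score_vec s + usubmx x).
Proof.
elim: L s x => [|p L IH] s x Ls /=.
  by move=> ->; rewrite linear0 addr0; apply/landau_score_permutohedron/landau_pending_nil.
move=> [_ [b [/conv2_segment [t t01 ->] [Lb ->]]]].
have play i : (i == p.1) || (i == p.2) ->
    permutohedron (delta_mx i 0 + (score_vec s + usubmx b)).
  by move=> ip; rewrite addrA -score_vec_incr; exact: IH (landau_pending_play ip Ls) Lb.
have play1 := play p.1 (predU1l _ erefl).
have play2 := play p.2 (predU1r _ _ (eqxx _)).
have := permutohedron_convex play1 play2 t01.
by rewrite convex_combDr !linearD !linearZ /= !col_mxKu addrCA.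
Qed.

Lemma newtU_top_permutohedron x : newtU x -> permutohedron (usubmx x + const_mx 1).
Proof.
rewrite newtU_edges => /(landau_pending_permutohedron (landau_pending_ltpairs n)).
by rewrite addrC; congr (permutohedron (_ + _)); apply/matrixP => k l; rewrite !mxE.
Qed.

Lemma newtU_perm_vertex (s : 'S_n) :
  exists2 x : 'cV[R]_(n + n), newtU x & usubmx x + const_mx 1 = score_vec (fun k => s k).
Proof.
exists (\sum_(p <- ltpairs n) if (s p.2 < s p.1)%N then arc p.1 p.2 else arc p.2 p.1).
  rewrite newtU_edges; apply: bigmsum_sum => p.
  by case: ifP => _;
    [exact: (@mem_conv _ _ [:: _; _] 0) | exact: (@mem_conv _ _ [:: _; _] 1)].
apply/matrixP => k l; rewrite (ord1 l) linear_sum !mxE summxE -(sum_ltpairs_perm s k).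
rewrite -natr1 natr_sum; congr (_ + _); rewrite !big_seq; apply: eq_bigr => p.
rewrite mem_filter => /andP[/= lt_p _].
have s_neq : (s p.1 : nat) != s p.2 by rewrite val_eqE (inj_eq perm_inj) -val_eqE ltn_eqF.
rewrite (fun_if usubmx) !col_mxKu.
by case: ltngtP s_neq => // _ _; rewrite !mxE andbT /= muln1 muln0 ?addn0 eq_sym.
Qed.

Lemma permutohedron_newtU_top y : permutohedron y ->
  exists2 x : 'cV[R]_(n + n), newtU x & usubmx x + const_mx 1 = y.
Proof.
move: y; apply: conv_sub_convex => [_ _ t [x Nx <-] [x' Nx' <-] t01|i].
  exists (t *: x + (1 - t) *: x'); first exact: newtU_convex.
  by rewrite convex_combDr !linearD !linearZ.
rewrite size_map => iS; rewrite (nth_map 1%g) //; exact: newtU_perm_vertex.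
Qed.

End NewtonPolytope.

Section UnimodularMap.
Variables (R : realFieldType) (n : nat).

Definition unimod_mx : 'M[int]_(n + n) := block_mx 1%:M 0 1%:M 1%:M.

Definition unimod_shift : 'cV[int]_(n + n) :=
  col_mx (const_mx 1) (const_mx (- (n.-1)%:Z)).

Lemma unimod_mx_unit : unimod_mx \in unitmx.
Proof. by rewrite unitmxE det_lblock !det1 mulr1 unitr1. Qed.

Lemma unimod_affineE (x : 'cV[R]_(n + n)) :
  map_mx intr unimod_mx *m x + map_mx intr unimod_shift =
  col_mx (usubmx x + const_mx 1) (usubmx x + dsubmx x - const_mx (n.-1)%:R).
Proof.
rewrite -[x in _ *m x]vsubmxK map_block_mx mul_block_col map_col_mx add_col_mx.
rewrite !map_scalar_mx !map_mx0 !mul1mx mul0mx addr0.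
by congr col_mx; apply/matrixP => k l; rewrite !mxE ?intrN.
Qed.

End UnimodularMap.

Theorem mainTheorem3 (R : realFieldType) (n : nat) (hn : (1 <= n)%N) :
  @unimod_equiv R (n + n) (@newtU R n) (@pad0 R n n (@permutohedron R n)).
Proof.
exists (unimod_mx n), (unimod_shift n); split; first exact: unimod_mx_unit.
move=> y; split.
  move=> [p [Pp ->]]; have [x Nx <-] := permutohedron_newtU_top Pp.
  by exists x; split => //; rewrite unimod_affineE newtU_halves // subrr.
move=> [x [Nx ->]]; exists (usubmx x + const_mx 1).
rewrite unimod_affineE newtU_halves // subrr.
by split => //; apply: newtU_top_permutohedron.
Qed.
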